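(* Let $m,a,b,t\in\mathbb{N}$ with $m\geq 3$, $a\geq 1$, $t\in\{2,\ldots,m-1\}$ and $(t-1)(am+1)<bm+t<t(am+1)$, and let $S=\langle m,\ am+1,\ bm+t\rangle$ (a MANS-semigroup with embedding dimension $3$). Then $S$ is pseudo-symmetric if and only if $t=\frac{m+1}{2}$ and $t=\frac{b+1}{a}$.
   Context: $\mathbb{N}=\{0,1,2,\ldots\}$. $\langle A\rangle$ is the submonoid of $(\mathbb{N},+)$ generated by $A$; a numerical semigroup is a submonoid of $\mathbb{N}$ with finite complement. $\mathrm{F}(S)$ is the largest integer not in $S$. A numerical semigroup is irreducible if it cannot be expressed as the intersection of two numerical semigroups properly containing it; it is pseudo-symmetric if it is irreducible and $\mathrm{F}(S)$ is even. A MANS-semigroup is a numerical semigroup with $w(1)<\cdots<w(\mathrm{m}(S)-1)$, where $\mathrm{m}(S)$ is the least element of $S\setminus\{0\}$ and $w(i)$ the least element of $S$ congruent to $i$ modulo $\mathrm{m}(S)$. *)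

From mathcomp Require Import all_boot.
Set Implicit Arguments. Unset Strict Implicit. Unset Printing Implicit Defensive.

Inductive gen (A : seq nat) : nat -> Prop :=
  | gen0 : gen A 0
  | genS : forall x a, gen A x -> a \in A -> gen A (x + a).

Definition numerical_semigroup (S : nat -> Prop) : Prop :=
  S 0 /\ (forall x y, S x -> S y -> S (x + y)) /\
  exists N, forall n, N <= n -> S n.

Definition proper_subset (S T : nat -> Prop) : Prop :=
  (forall x, S x -> T x) /\ exists x, T x /\ ~ S x.

Definition irreducible (S : nat -> Prop) : Prop :=
  numerical_semigroup S /\
  ~ exists S1 S2 : nat -> Prop,
      [/\ numerical_semigroup S1, numerical_semigroup S2,
          proper_subset S S1, proper_subset S S2 &
          forall x, S x <-> (S1 x /\ S2 x)].

(* f is the Frobenius number F(S) (largest integer not in S); when S = N,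
   F(S) = -1 and no natural f satisfies this predicate. *)
Definition frobenius (S : nat -> Prop) (f : nat) : Prop :=
  ~ S f /\ forall n, f < n -> S n.

(* pseudo-symmetric: irreducible with even Frobenius number
   (F(N) = -1 is odd, so S = N is never pseudo-symmetric). *)
Definition pseudo_symmetric (S : nat -> Prop) : Prop :=
  irreducible S /\ exists f, frobenius S f /\ ~~ odd f.

From mathcomp Require Import all_boot zify.
From Stdlib Require Import Classical.
Set Implicit Arguments. Unset Strict Implicit. Unset Printing Implicit Defensive.

(* For i = q * t + r with r < t, the least element of S congruent to i modulo m
   is w(i) = i + m * (r * a + q * b); the bounds on b make w increasing on
   residues, so F(S) = w(m - 1) - m.  A pseudo-Frobenius number other than F(S)
   has a residue i with t | i + 1 and m <= i + t, and at most one residue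
   qualifies.  S is irreducible iff F(S) is its only special gap (a gap h with
   h + s in S for every nonzero s in S, and 2h in S); an irreducible S with
   F(S) = 2h has h as a pseudo-Frobenius number.  Hence S is pseudo-symmetric
   iff F(S) = 2f for the pseudo-Frobenius number f other than F(S), and
   comparing residues and quotients modulo m turns this into 2t = m + 1 and
   at = b + 1. *)

Lemma gen_add A x y : gen A x -> gen A y -> gen A (x + y).
Proof.
move=> Ax; elim=> [|z g _ IH Ag]; first by rewrite addn0.
by rewrite addnA; apply: genS.
Qed.

Lemma gen_mem A g : g \in A -> gen A g.
Proof. by move/(genS (gen0 A)); rewrite add0n. Qed.

Lemma gen_mul A k g : g \in A -> gen A (k * g).
Proof.
move=> Ag; elim: k => [|k IH]; first exact: gen0.
by rewrite mulSn addnC; apply: genS.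
Qed.

Definition pseudo_frobenius (S : nat -> Prop) (f : nat) : Prop :=
  ~ S f /\ forall s, S s -> 0 < s -> S (f + s).

Definition special_gap (S : nat -> Prop) (h : nat) : Prop :=
  pseudo_frobenius S h /\ S (h + h).

Section NumericalSemigroup.

Variables (S : nat -> Prop) (F : nat).
Hypotheses (S0 : S 0) (SD : forall x y, S x -> S y -> S (x + y))
  (frobS : frobenius S F).

Lemma numerical_semigroupS : numerical_semigroup S.
Proof. by do 2!split=> //; exists F.+1 => n; apply: frobS.2. Qed.

Lemma gap_gt0 x : ~ S x -> 0 < x.
Proof. by case: x. Qed.

Lemma gap_le_frobenius x : ~ S x -> x <= F.
Proof. by move=> Sx; rewrite leqNgt; apply/negP => /frobS.2. Qed.

Lemma frobenius_uniq F' : frobenius S F' -> F' = F.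
Proof.
move=> frobF'; apply/eqP; rewrite eqn_leq gap_le_frobenius; last exact: frobF'.1.
by rewrite leqNgt; apply/negP => /frobF'.2; apply: frobS.1.
Qed.

Lemma special_gap_frobenius : special_gap S F.
Proof.
have F_gt0 := gap_gt0 frobS.1.
split; last by apply: frobS.2; lia.
by split=> [|s _ s_gt0]; [exact: frobS.1 | apply: frobS.2; lia].
Qed.

Lemma numerical_semigroup_adjoin h :
  special_gap S h -> numerical_semigroup (fun x => S x \/ x = h).
Proof.
move=> [[_ Sh] Shh]; split; first by left.
split; last by exists F.+1 => n /frobS.2; left.
move=> x y [Sx|->] [Sy|->]; try by left; auto.
- by case: (posnP x) => [->|x_gt0]; [right | left; rewrite addnC; apply: Sh].
- by case: (posnP y) => [->|y_gt0]; [right; rewrite addn0 | left; apply: Sh].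
Qed.

Lemma exists_greatest_gap (Q : nat -> Prop) x : Q x -> ~ S x ->
  exists h, [/\ Q h, ~ S h & forall y, Q y -> ~ S y -> y <= h].
Proof.
have [n] := ubnP (F - x); elim: n x => // n IH x ltFx Qx Sx.
case: (classic (exists y, [/\ x < y, Q y & ~ S y])) => [[y [xy Qy Sy]]|none].
  by apply: (IH y) => //; have := gap_le_frobenius Sy; lia.
exists x; split=> // y Qy Sy; rewrite leqNgt; apply/negP => xy.
by apply: none; exists y.
Qed.

Lemma exists_pseudo_frobenius x : ~ S x ->
  exists f, [/\ pseudo_frobenius S f, x <= f & S (f - x)].
Proof.
move=> Sx.
have [|f [[xf Sfx] Sf fmax]] :=
  @exists_greatest_gap (fun y => x <= y /\ S (y - x)) x _ Sx.
  by rewrite subnn.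
exists f; split=> //; split=> // s Ss s_gt0; apply: NNPP => Sfs.
have : f + s <= f by apply: fmax Sfs; split; [lia | rewrite -addnBAC //; exact: SD].
lia.
Qed.

Lemma special_gap_extension (T : nat -> Prop) :
  (forall x y, T x -> T y -> T (x + y)) -> proper_subset S T ->
  exists2 h, T h & special_gap S h.
Proof.
move=> TD [ST [x [Tx Sx]]].
have [h [Th Sh hmax]] := exists_greatest_gap Tx Sx.
have above y : T y -> h < y -> S y.
  by move=> Ty hy; apply: NNPP => Sy; have := hmax y Ty Sy; rewrite leqNgt hy.
have h_gt0 := gap_gt0 Sh.
exists h => //; split; last by apply: above; [exact: TD | lia].
by split=> // s Ss s_gt0; apply: above; [apply: TD => //; apply: ST | lia].
Qed.

Lemma irreducibleP : irreducible S <-> forall h, special_gap S h -> h = F.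
Proof.
split=> [[_ irrS] h h_sp|sp_uniq].
  apply: NNPP => hF; apply: irrS.
  exists (fun x => S x \/ x = h), (fun x => S x \/ x = F); split.
  - exact: numerical_semigroup_adjoin.
  - exact/numerical_semigroup_adjoin/special_gap_frobenius.
  - by split=> [x|]; [left | exists h; split; [right | case: h_sp => -[]]].
  - by split=> [x|]; [left | exists F; split; [right | exact: frobS.1]].
  - by move=> x; split=> [Sx|[[//|->] [//|/hF]]]; first by split; left.
split; first exact: numerical_semigroupS.
case=> S1 [S2 [[_ [S1D _]] [_ [S2D _]] S1p S2p S12]].
have memF T : (forall x y, T x -> T y -> T (x + y)) -> proper_subset S T -> T F.
  by move=> TD /(special_gap_extension TD) [h Th /sp_uniq <-].
by apply: frobS.1; apply/S12; split; apply: memF.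
Qed.

Lemma pseudo_frobenius_half h : irreducible S -> F = h + h -> pseudo_frobenius S h.
Proof.
move=> /irreducibleP sp_uniq Fh.
have Sh : ~ S h by move=> Sh; apply: frobS.1; rewrite Fh; exact: SD.
have [f [pf hf Sfh]] := exists_pseudo_frobenius Sh.
have fF : f <> F by move=> fF; move: Sfh; rewrite fF Fh addnK.
have Sff : ~ S (f + f) by move=> Sff; apply/fF/sp_uniq.
suff -> : h = f by [].
by have := gap_le_frobenius Sff; lia.
Qed.

End NumericalSemigroup.

Lemma dvdn_succ_window_eq t m i j : m <= i + t -> m <= j + t -> i < m -> j < m ->
  t %| i.+1 -> t %| j.+1 -> i = j.
Proof.
wlog ij : i j / i <= j => [hyp|].
  by case/orP: (leq_total i j) => ? *; [|symmetry]; apply: hyp.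
move=> mi _ _ jm ti tj; have := dvdn_sub tj ti; rewrite subSS.
case: (posnP (j - i)) => [|ji /(dvdn_leq ji)]; lia.
Qed.

Lemma modn_qr d q r : r < d -> (q * d + r) %% d = r.
Proof. by move=> rd; rewrite modnMDl modn_small. Qed.

Lemma divn_qr d q r : r < d -> (q * d + r) %/ d = q.
Proof. by move=> rd; rewrite divnMDl ?divn_small ?addn0 //; apply: leq_ltn_trans rd. Qed.

Lemma double_qr_eq m k K i : i < m ->
  (k * m + i).*2 = K * m + (m - 1) -> i.*2.+1 = m /\ k.*2 = K.
Proof.
move=> im E; case: (ltnP i.*2 m) => [i2m|mi2].
  move: E; rewrite doubleD doubleMl => E.
  have := congr1 (modn^~ m) E; have := congr1 (divn^~ m) E.
  by rewrite /= !divn_qr ?modn_qr //; lia.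
have E' : (k.*2).+1 * m + (i.*2 - m) = K * m + (m - 1).
  by rewrite -E doubleD doubleMl mulSnr; lia.
have := congr1 (modn^~ m) E'; rewrite /= !modn_qr; lia.
Qed.

Section ThreeGenerated.

Variables m a b t : nat.
Hypotheses (a_gt0 : 0 < a) (t_gt1 : 1 < t) (t_lt_m : t < m)
  (b_ge : (t - 1) * a <= b) (b_lt : b < t * a).

Local Notation S := (gen [:: m; a * m + 1; b * m + t]).

Let t_gt0 : 0 < t := ltnW t_gt1.
Let m_gt0 : 0 < m := ltn_trans t_gt0 t_lt_m.

(* [i + m * kunz i] is the least element of S congruent to i modulo m. *)
Definition kunz i := i %% t * a + i %/ t * b.

Lemma kunzE q r : r < t -> kunz (q * t + r) = r * a + q * b.
Proof. by move=> rt; rewrite /kunz modnMDl divnMDl // modn_small // divn_small ?addn0. Qed.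

Lemma kunz_small i : i < t -> kunz i = i * a.
Proof. by move=> it; have := kunzE 0 it; rewrite mul0n add0n addn0. Qed.

Lemma kunzDt i : kunz (i + t) = kunz i + b.
Proof.
rewrite (divn_eq i t); have := ltn_pmod i t_gt0.
move: (i %/ t) (i %% t) => q r rt.
by rewrite -addnA [r + t]addnC addnA -mulSnr !kunzE //; lia.
Qed.

Lemma kunzS_ndvd i : ~~ (t %| i.+1) -> kunz i.+1 = kunz i + a.
Proof.
rewrite (divn_eq i t); have := ltn_pmod i t_gt0.
move: (i %/ t) (i %% t) => q r rt; rewrite kunzE //.
case: (ltngtP r.+1 t) => [rt'|tr|<-]; last by rewrite -addnS -mulSnr dvdn_mull.
  by rewrite -addnS kunzE //; lia.
by move: rt tr; lia.
Qed.

Lemma kunzS i : kunz i <= kunz i.+1 <= kunz i + a.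
Proof.
case: (boolP (t %| i.+1)) => [/dvdnP [[|k] Ek]|/kunzS_ndvd ->]; last by lia.
  by move: Ek; rewrite mul0n.
have -> : i = k * t + (t - 1) by move: Ek; rewrite mulSn; lia.
have -> : (k * t + (t - 1)).+1 = k.+1 * t + 0 by rewrite mulSnr; lia.
by rewrite !kunzE; lia.
Qed.

Lemma kunz_mono : {homo kunz : i j / i <= j}.
Proof. by apply: homo_leq leq_trans _ => i; case/andP: (kunzS i). Qed.

Lemma gen_kunz_le n : S n -> kunz (n %% m) <= n %/ m.
Proof.
elim=> [|x g _ IH]; first by rewrite mod0n div0n kunz_small.
move: IH; rewrite (divn_eq x m); have := ltn_pmod x m_gt0.
move: (x %/ m) (x %% m) => q i im; rewrite modn_qr // divn_qr // => IH.
rewrite !inE => /or3P[]/eqP->.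
- have -> : q * m + i + m = q.+1 * m + i by rewrite mulSnr; lia.
  by rewrite modn_qr // divn_qr //; lia.
- case: (ltnP i.+1 m) => [im'|mi].
    have -> : q * m + i + (a * m + 1) = (q + a) * m + i.+1 by rewrite mulnDl; lia.
    by rewrite modn_qr // divn_qr //; have := kunzS i; lia.
  have -> : q * m + i + (a * m + 1) = (q + a).+1 * m + 0 by rewrite mulSnr mulnDl; lia.
  by rewrite modn_qr // divn_qr // kunz_small.
- case: (ltnP (i + t) m) => [itm|mit].
    have -> : q * m + i + (b * m + t) = (q + b) * m + (i + t) by rewrite mulnDl; lia.
    by rewrite modn_qr // divn_qr // kunzDt; lia.
  have -> : q * m + i + (b * m + t) = (q + b).+1 * m + (i + t - m).
    by rewrite mulSnr mulnDl; lia.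
  rewrite modn_qr ?divn_qr; try lia.
  by have := @kunz_mono (i + t - m) i; lia.
Qed.

Lemma gen_kunz n : S n <-> kunz (n %% m) <= n %/ m.
Proof.
split=> [|le]; first exact: gen_kunz_le.
have -> : n = n %/ m * m + n %% m := divn_eq n m.
move: (n %/ m) (n %% m) le => q i.
rewrite [in S _](divn_eq i t) /kunz; move: (i %/ t) (i %% t) => y x le.
have -> : q * m + (y * t + x) =
    (q - (x * a + y * b)) * m + (x * (a * m + 1) + y * (b * m + t)).
  have := leq_mul2r m (x * a + y * b) q; rewrite le orbT mulnBl.
  by rewrite !mulnDl !mulnDr; lia.
apply: gen_add; [apply: gen_mul | apply: gen_add; apply: gen_mul];
  by rewrite !inE eqxx ?orbT.
Qed.

Lemma gen_qr q i : i < m -> S (q * m + i) <-> kunz i <= q.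
Proof. by move=> im; rewrite gen_kunz modn_qr // divn_qr. Qed.

Definition frob := (kunz (m - 1)).-1 * m + (m - 1).

Lemma kunz_gt0 i : 0 < i -> 0 < kunz i.
Proof. by move=> i_gt0; apply: leq_trans (kunz_mono i_gt0); rewrite kunz_small // mul1n. Qed.

Lemma frobenius_gen : frobenius S frob.
Proof.
have K_gt0 : 0 < kunz (m - 1) by apply: kunz_gt0; lia.
split=> [|n]; first by rewrite /frob gen_qr; lia.
rewrite /frob (divn_eq n m); have := ltn_pmod n m_gt0.
move: (n %/ m) (n %% m) => q i im lt; rewrite gen_qr //.
apply: leq_trans (kunz_mono (_ : i <= m - 1)) _; first lia.
rewrite -ltnS -(ltn_pmul2r m_gt0) mulSnr -(prednK K_gt0) mulSnr.
by move: lt; move: (kunz (m - 1)).-1 => k; lia.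
Qed.

Lemma pseudo_frobenius_kunz q i : i < m -> pseudo_frobenius S (q * m + i) ->
  kunz i = q.+1 /\ (i = m - 1 \/ t %| i.+1 /\ m <= i + t).
Proof.
move=> im [Sf Sfs]; rewrite gen_qr // in Sf.
have Sfg g : g \in [:: m; a * m + 1; b * m + t] -> S (q * m + i + g).
  move=> gA; apply: Sfs; first exact: gen_mem.
  by move: gA; rewrite !inE => /or3P[]/eqP->; lia.
have Ek : kunz i = q.+1.
  have := Sfg m; rewrite inE eqxx -addnA [i + m]addnC addnA -mulSnr gen_qr //.
  by move/(_ isT); lia.
split=> //; case: (ltnP i.+1 m) => [im1|]; last by left; lia.
right; split.
  apply: contraT => /kunzS_ndvd Ek1.
  have := Sfg (a * m + 1); rewrite !inE eqxx orbT.
  have -> : q * m + i + (a * m + 1) = (q + a) * m + i.+1 by rewrite mulnDl; lia.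
  by rewrite gen_qr // Ek1 Ek => /(_ isT); lia.
rewrite leqNgt; apply/negP => itm.
have := Sfg (b * m + t); rewrite !inE eqxx !orbT.
have -> : q * m + i + (b * m + t) = (q + b) * m + (i + t) by rewrite mulnDl; lia.
by rewrite gen_qr // kunzDt Ek => /(_ isT); lia.
Qed.

Lemma pseudo_frobenius_neq_frob f : pseudo_frobenius S f -> f <> frob ->
  exists i, [/\ i < m, m <= i + t, t %| i.+1 & f = (kunz i).-1 * m + i].
Proof.
rewrite (divn_eq f m); have := ltn_pmod f m_gt0.
move: (f %/ m) (f %% m) => q i im /(pseudo_frobenius_kunz im) [Ek [im1|[ti mit]]] fF.
  by case: fF; rewrite /frob -im1 Ek.
by exists i; rewrite Ek.
Qed.

Lemma kunz_last_double : 2 * t = m + 1 ->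
  (kunz (m - 1)).-1 = ((kunz (t - 1)).-1).*2 <-> a * t = b + 1.
Proof.
move=> mt; have -> : m - 1 = t - 2 + t by lia.
have Et1 : t - 1 = (t - 2).+1 by lia.
have Et : a * t = a * (t - 2).+2 by rewrite -Et1 subn1 prednK.
rewrite kunzDt !kunz_small; [|lia|lia].
by rewrite Et1 Et; lia.
Qed.

Definition half_frob := (kunz (t - 1)).-1 * m + (t - 1).

Lemma pseudo_frobenius_eq_half_frob f : 2 * t = m + 1 ->
  pseudo_frobenius S f -> f <> frob -> f = half_frob.
Proof.
move=> mt pf fF; have [i [im mit ti ->]] := pseudo_frobenius_neq_frob pf fF.
suff -> : i = t - 1 by [].
by apply: (@dvdn_succ_window_eq t m); rewrite ?subn1 ?prednK ?dvdnn //; lia.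
Qed.

Lemma frob_halfE : 2 * t = m + 1 -> a * t = b + 1 -> frob = half_frob + half_frob.
Proof.
move=> mt /(kunz_last_double mt) K2; rewrite /frob /half_frob K2 -doubleMl -addnn.
by move: ((kunz (t - 1)).-1 * m) => x; lia.
Qed.

Lemma pseudo_frobenius_double_frob h : pseudo_frobenius S h -> h + h = frob ->
  2 * t = m + 1 /\ a * t = b + 1.
Proof.
move=> pf hh.
have hF : h <> frob by move=> hF; have := gap_gt0 (gen0 _) frobenius_gen.1; lia.
have [i [im mit ti Eh]] := pseudo_frobenius_neq_frob pf hF.
have [m_2i1 K2] : i.*2.+1 = m /\ ((kunz i).-1).*2 = (kunz (m - 1)).-1.
  by apply: double_qr_eq; rewrite // -addnn -Eh hh.
have ti1 : t = i.+1 by have := dvdn_leq (ltn0Sn i) ti; lia.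
have mt : 2 * t = m + 1 by lia.
split=> //; apply/(kunz_last_double mt).
by rewrite -K2 ti1 subSS subn0.
Qed.

Lemma pseudo_symmetric_gen : pseudo_symmetric S <-> 2 * t = m + 1 /\ a * t = b + 1.
Proof.
have frobS := frobenius_gen.
split=> [[irrS [f [frobf f_even]]]|[mt ab]].
  have Eh : frob = f./2 + f./2.
    by rewrite addnn even_halfK // -(frobenius_uniq frobS frobf).
  apply: (pseudo_frobenius_double_frob _ (esym Eh)).
  exact: (pseudo_frobenius_half (gen0 _) (@gen_add _) frobS irrS Eh).
have Efrob := frob_halfE mt ab.
split; last by exists frob; split=> //; rewrite Efrob addnn odd_double.
apply/(irreducibleP (gen0 _) (@gen_add _) frobS) => h [pf Shh].
apply: NNPP => hF; apply: frobS.1.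
by rewrite Efrob -(pseudo_frobenius_eq_half_frob mt pf hF).
Qed.

End ThreeGenerated.

Lemma third_generator_bounds m a b t : 0 < t ->
  (t - 1) * (a * m + 1) < b * m + t < t * (a * m + 1) -> (t - 1) * a <= b < t * a.
Proof.
move=> t_gt0 /andP[lo hi].
have m_gt0 : 0 < m by case: (posnP m) hi => [->|//]; rewrite !muln0 muln1 ltnn.
rewrite -(leq_pmul2r m_gt0) -(ltn_pmul2r m_gt0).
by move: lo hi; rewrite !mulnDr !muln1 !mulnA; lia.
Qed.

Theorem proposition3p25 (m a b t : nat) :
  3 <= m -> 1 <= a -> 2 <= t <= m - 1 ->
  (t - 1) * (a * m + 1) < b * m + t < t * (a * m + 1) ->
  pseudo_symmetric (gen [:: m; a * m + 1; b * m + t]) <->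
  (2 * t = m + 1 /\ a * t = b + 1).
Proof.
move=> _ a_gt0 /andP[t_gt1 t_le].
move=> /(third_generator_bounds (ltnW t_gt1)) /andP[b_ge b_lt].
by apply: pseudo_symmetric_gen => //; lia.
Qed.
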